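(* Let $H$ be a connected graph and let $G=KB(H)$ be its biclique graph. Let $b_1,b_2$ be false-twin vertices of $G$ (i.e. $b_1\neq b_2$ and $N_G(b_1)=N_G(b_2)$), and let $B_1,B_2$ be the bicliques of $H$ corresponding to $b_1,b_2$. Suppose that there is no edge of $H$ between a vertex of $B_1$ and a vertex of $B_2$. Then there exists a vertex $v\in V(H)$ that is adjacent to every vertex of $B_1$ and to every vertex of $B_2$. Furthermore, $G$ contains $K_5$ as an induced subgraph.
   Context: All graphs are finite, simple, undirected and connected. A biclique of a graph $H$ is a maximal (under inclusion of vertex sets) induced complete bipartite subgraph of $H$ with both sides nonempty. The biclique graph $KB(H)$ is the intersection graph of the bicliques of $H$: its vertices are the bicliques of $H$, and two distinct bicliques are adjacent iff they share at least one vertex. $N(u)$ denotes the open neighborhood of $u$; two vertices $u,w$ are false twins if $N(u)=N(w)$. *)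

From mathcomp Require Import all_boot.
Set Implicit Arguments. Unset Strict Implicit. Unset Printing Implicit Defensive.

Definition simple_graph (T : finType) (e : rel T) : Prop :=
  symmetric e /\ irreflexive e.

Definition connected_graph (T : finType) (e : rel T) : Prop :=
  forall x y : T, connect e x y.

Definition induces_complete_bipartite (T : finType) (e : rel T) (S : {set T}) : Prop :=
  exists X Y : {set T},
    [/\ S = X :|: Y, [disjoint X & Y], X != set0, Y != set0 &
     [/\ {in X &, forall x x', ~~ e x x'},
         {in Y &, forall y y', ~~ e y y'} &
         {in X & Y, forall x y, e x y}]].

(* A biclique (identified with its vertex set, since it is induced):
   maximal under inclusion of vertex sets. *)
Definition biclique (T : finType) (e : rel T) (S : {set T}) : Prop :=
  induces_complete_bipartite e S /\
  forall S' : {set T}, S \subset S' -> induces_complete_bipartite e S' -> S' = S.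

Definition KB_adj (T : finType) (B1 B2 : {set T}) : Prop :=
  B1 <> B2 /\ B1 :&: B2 != set0.

Definition KB_false_twins (T : finType) (e : rel T) (B1 B2 : {set T}) : Prop :=
  B1 <> B2 /\
  forall B : {set T}, biclique e B -> (KB_adj B B1 <-> KB_adj B B2).

Definition KB_has_induced_K5 (T : finType) (e : rel T) : Prop :=
  exists f : 'I_5 -> {set T},
    (forall i, biclique e (f i)) /\
    (forall i j, i != j -> KB_adj (f i) (f j)).

From mathcomp Require Import all_boot.
From Stdlib Require Import ClassicalDescription.

Set Implicit Arguments. Unset Strict Implicit. Unset Printing Implicit Defensive.

(* Two vertices of a biclique are adjacent iff they lie on different sides;
   hence it contains no triangle, and every vertex of it is adjacent to an
   endpoint of each of its edges.  A biclique C other than B1 meeting B1 also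
   meets B2, in a vertex z non-adjacent to all of B1 ∩ C; so C cannot contain
   an edge of B1.  Consequently, whenever w ∉ B1 sees x ∈ B1 and x u is an
   edge of B1, the biclique through the star {x; w, u} forces w ~ u, and w
   sees all of B1.  Connectivity gives such a w, and the biclique through the
   edge leaving B1 towards w meets B2 in a neighbour of w, so w sees all of
   B2 as well.  Taking edges a a' in B1 and z z' in B2, the four bicliques
   through the stars {w; p, q} with p ∈ {a, a'}, q ∈ {z, z'} are distinct by
   triangle-freeness, pairwise share w, and all meet B1: together with B1
   they form a K5 in KB(H). *)

Lemma KB_adj_sym (T : finType) (A B : {set T}) : KB_adj A B -> KB_adj B A.
Proof. by move=> [nAB mAB]; split; [move=> BA; apply: nAB | rewrite setIC]. Qed.

Lemma KB_adj_witness (T : finType) (A B : {set T}) x y :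
  x \in A -> x \in B -> y \in A -> y \notin B -> KB_adj A B.
Proof.
move=> xA xB yA yB; split; first by move=> AB; move: yB; rewrite -AB yA.
by apply/set0Pn; exists x; rewrite inE xA.
Qed.

Lemma KB_has_induced_K5_of (T : finType) (e : rel T) (C0 C1 C2 C3 C4 : {set T}) :
  biclique e C0 -> biclique e C1 -> biclique e C2 -> biclique e C3 ->
  biclique e C4 ->
  KB_adj C0 C1 -> KB_adj C0 C2 -> KB_adj C0 C3 -> KB_adj C0 C4 ->
  KB_adj C1 C2 -> KB_adj C1 C3 -> KB_adj C1 C4 ->
  KB_adj C2 C3 -> KB_adj C2 C4 -> KB_adj C3 C4 ->
  KB_has_induced_K5 e.
Proof.
move=> b0 b1 b2 b3 b4 a01 a02 a03 a04 a12 a13 a14 a23 a24 a34.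
pose C (i : nat) := nth C0 [:: C0; C1; C2; C3; C4] i.
have adj i j : i < j < 5 -> KB_adj (C i) (C j).
  by case: i => [|[|[|[|i]]]]; case: j => [|[|[|[|[|j]]]]]; rewrite ?andbF.
exists (fun i => C i); split; first by move=> [[|[|[|[|[|i]]]]] ?].
move=> i j; rewrite neq_ltn => /orP [ij|ji]; last apply: KB_adj_sym;
  by apply: adj; rewrite ?ij ?ji ltn_ord.
Qed.

Lemma KB_false_twins_sym (T : finType) (e : rel T) (B1 B2 : {set T}) :
  KB_false_twins e B1 B2 -> KB_false_twins e B2 B1.
Proof. by move=> [nB tw]; split=> [B21|B bB]; [apply: nB | rewrite tw]. Qed.

Lemma KB_false_twins_meet (T : finType) (e : rel T) (B1 B2 : {set T}) :
  KB_false_twins e B1 B2 ->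
  forall C, biclique e C -> C <> B1 -> C <> B2 ->
  C :&: B1 != set0 -> C :&: B2 != set0.
Proof.
by move=> [_ tw] C bC CB1 CB2 mC1; have [] := (tw C bC).1 (conj CB1 mC1).
Qed.

Section Bicliques.

Variables (T : finType) (e : rel T).

Lemma biclique_exists (S : {set T}) :
  induces_complete_bipartite e S -> exists2 C, biclique e C & S \subset C.
Proof.
pose cb A := if excluded_middle_informative (induces_complete_bipartite e A)
             then true else false.
have cbP A : reflect (induces_complete_bipartite e A) (cb A).
  by rewrite /cb; case: excluded_middle_informative => h; constructor.
move=> /cbP cbS; have [C /maxsetP [/cbP cbC maxC] sSC] := maxset_exists cbS.
by exists C => //; split=> // S' sCS' /cbP cbS'; exact: maxC.
Qed.

Lemma connect_exit_edge (A : {set T}) x y :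
  connect e x y -> x \in A -> y \notin A ->
  exists a b, [/\ a \in A, b \notin A & e a b].
Proof.
move=> /connectP [p]; elim: p x => [|c p IH] x /=; first by move=> _ -> ->.
move=> /andP [exc pc] yE xA; case cA: (c \in A); first exact: IH pc yE cA.
by exists x, c; rewrite cA.
Qed.

Hypothesis e_sym : symmetric e.

Section OneSet.

Variable S : {set T}.
Hypothesis S_cb : induces_complete_bipartite e S.

Lemma complete_bipartite_colouring :
  exists s : T -> bool, {in S &, forall a b, e a b = (s a != s b)}.
Proof.
have [X [Y [-> dXY _ _ [iX iY cXY]]]] := S_cb.
exists (mem X) => a b; rewrite !inE => /orP [aX|aY] /orP [bX|bY] /=.
- by rewrite (negbTE (iX _ _ aX bX)) aX bX.
- by rewrite cXY // aX (disjointFl dXY bY).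
- by rewrite e_sym cXY // bX (disjointFl dXY aY).
- by rewrite (negbTE (iY _ _ aY bY)) (disjointFl dXY aY) (disjointFl dXY bY).
Qed.

Lemma complete_bipartite_edge_dominating a b c :
  a \in S -> b \in S -> c \in S -> e a b -> e c a || e c b.
Proof.
have [s sP] := complete_bipartite_colouring => aS bS cS.
rewrite (sP _ _ aS bS) (sP _ _ cS aS) (sP _ _ cS bS).
by case: (s a); case: (s b); case: (s c).
Qed.

Lemma complete_bipartite_triangle_free a b c :
  a \in S -> b \in S -> c \in S -> e a b -> e b c -> ~~ e a c.
Proof.
have [s sP] := complete_bipartite_colouring => aS bS cS.
rewrite (sP _ _ aS bS) (sP _ _ bS cS) (sP _ _ aS cS).
by case: (s a); case: (s b); case: (s c).
Qed.

Lemma complete_bipartite_neighbour a : a \in S -> exists2 b, b \in S & e a b.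
Proof.
have [X [Y [-> _ /set0Pn [x xX] /set0Pn [y yY] [_ _ cXY]]]] := S_cb.
rewrite inE => /orP [aX|aY].
- by exists y; rewrite ?inE ?yY ?orbT ?cXY.
- by exists x; rewrite ?inE ?xX // e_sym cXY.
Qed.

Lemma complete_bipartite_neq0 : S != set0.
Proof.
have [X [Y [-> _ /set0Pn [x xX] _ _]]] := S_cb.
by apply/set0Pn; exists x; rewrite inE xX.
Qed.

Lemma complete_bipartite_nonadj_disjoint (A : {set T}) :
  {in S & A, forall a b, ~~ e a b} -> [disjoint S & A].
Proof.
move=> nSA; apply/pred0P => a /=; apply/negbTE/nandP.
case: (boolP (a \in S)) => aS; last by left.
have [b bS eab] := complete_bipartite_neighbour aS.
by right; apply: contraL eab => aA; rewrite e_sym nSA.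
Qed.

End OneSet.

Hypothesis e_irr : irreflexive e.

Lemma biclique_through_star v p q :
  e v p -> e v q -> ~~ e p q ->
  exists2 C, biclique e C & [/\ v \in C, p \in C & q \in C].
Proof.
move=> evp evq npq.
have vpq : v \notin [set p; q].
  by rewrite !inE; apply/norP; split; apply/eqP => vE;
    [move: evp | move: evq]; rewrite -vE e_irr.
have cb : induces_complete_bipartite e ([set v] :|: [set p; q]).
  exists [set v], [set p; q]; split; rewrite ?disjoints1 //.
  - by apply/set0Pn; exists v; rewrite inE.
  - by apply/set0Pn; exists p; rewrite !inE eqxx.
  split=> a b; rewrite !inE.
  + by move=> /eqP -> /eqP ->; rewrite e_irr.
  + by move=> /orP [] /eqP -> /orP [] /eqP ->; rewrite ?e_irr // e_sym.
  + by move=> /eqP -> /orP [] /eqP ->.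
have [C bC sC] := biclique_exists cb.
by exists C => //; split; apply: (subsetP sC); rewrite !inE eqxx ?orbT.
Qed.

Lemma KB_has_induced_K5_of_star (B : {set T}) w a a' z z' :
  biclique e B -> a \in B -> a' \in B -> w \notin B -> e a a' -> e z z' ->
  {in [set a; a'; z; z'], forall x, e w x} ->
  {in [set a; a'] & [set z; z'], forall p q, ~~ e p q} ->
  KB_has_induced_K5 e.
Proof.
move=> bB aB a'B wB eaa' ezz' ewN nPQ.
have star p q : p \in [set a; a'] -> q \in [set z; z'] ->
    exists2 C, biclique e C & [/\ w \in C, p \in C & q \in C].
  move=> pP qQ; apply: biclique_through_star; last exact: nPQ.
    by apply: ewN; move: pP; rewrite !inE => /orP [] ->; rewrite ?orbT.
  by apply: ewN; move: qQ; rewrite !inE => /orP [] ->; rewrite ?orbT.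
have notin C x y : biclique e C -> w \in C -> x \in C ->
    e x y -> e w x -> e w y -> y \notin C.
  move=> bC wC xC exy ewx ewy; apply/negP => yC.
  by move: (complete_bipartite_triangle_free bC.1 wC xC yC ewx exy); rewrite ewy.
have ewa : e w a by rewrite ewN // !inE eqxx.
have ewa' : e w a' by rewrite ewN // !inE eqxx ?orbT.
have ewz : e w z by rewrite ewN // !inE eqxx ?orbT.
have ewz' : e w z' by rewrite ewN // !inE eqxx ?orbT.
have ea'a : e a' a by rewrite e_sym.
have [C1 b1 [w1 a1 z1]] := star a z (set21 _ _) (set21 _ _).
have [C2 b2 [w2 a2 z'2]] := star a z' (set21 _ _) (set22 _ _).
have [C3 b3 [w3 a'3 z3]] := star a' z (set22 _ _) (set21 _ _).
have [C4 b4 [w4 a'4 z'4]] := star a' z' (set22 _ _) (set22 _ _).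
have na'1 := notin _ _ _ b1 w1 a1 eaa' ewa ewa'.
have na'2 := notin _ _ _ b2 w2 a2 eaa' ewa ewa'.
have na3 := notin _ _ _ b3 w3 a'3 ea'a ewa' ewa.
have na4 := notin _ _ _ b4 w4 a'4 ea'a ewa' ewa.
have nz2 := notin _ _ _ b2 w2 z'2 (etrans (e_sym z' z) ezz') ewz' ewz.
have nz4 := notin _ _ _ b4 w4 z'4 (etrans (e_sym z' z) ezz') ewz' ewz.
apply: (KB_has_induced_K5_of bB b1 b2 b3 b4).
- exact: KB_adj_witness aB a1 a'B na'1.
- exact: KB_adj_witness aB a2 a'B na'2.
- exact: KB_adj_witness a'B a'3 aB na3.
- exact: KB_adj_witness a'B a'4 aB na4.
- exact: KB_adj_witness w1 w2 z1 nz2.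
- exact: KB_adj_witness w1 w3 a1 na3.
- exact: KB_adj_witness w1 w4 a1 na4.
- exact: KB_adj_witness w2 w3 a2 na3.
- exact: KB_adj_witness w2 w4 a2 na4.
- exact: KB_adj_witness w3 w4 z3 nz4.
Qed.

Section Twins.

Variables P Q : {set T}.
Hypothesis P_biclique : biclique e P.
Hypothesis twin_meet : forall C, biclique e C -> C <> P -> C <> Q ->
  C :&: P != set0 -> C :&: Q != set0.
Hypothesis PQ_nonadj : {in P & Q, forall a b, ~~ e a b}.

Lemma twin_edge_not_shared C x u :
  biclique e C -> C <> P -> x \in C -> u \in C -> x \in P -> u \in P ->
  ~~ e x u.
Proof.
move=> bC CP xC uC xP uP; apply/negP => exu.
have CQ : C <> Q.
  by move=> CE; move: xC; rewrite CE => /(PQ_nonadj uP); rewrite e_sym exu.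
have /set0Pn [z] : C :&: Q != set0.
  by apply: twin_meet => //; apply/set0Pn; exists x; rewrite inE xC.
rewrite inE => /andP [zC zQ].
move: (complete_bipartite_edge_dominating bC.1 xC uC zC exu).
by rewrite !(e_sym z) (negbTE (PQ_nonadj xP zQ)) (negbTE (PQ_nonadj uP zQ)).
Qed.

Lemma twin_neighbour_step w x u :
  w \notin P -> x \in P -> u \in P -> e w x -> e x u -> e w u.
Proof.
move=> wP xP uP ewx exu; apply/contraT => nwu.
have [C bC [xC wC uC]] := biclique_through_star (etrans (e_sym x w) ewx) exu nwu.
have CP : C <> P by move=> CE; move: wP; rewrite -CE wC.
by move: (twin_edge_not_shared bC CP xC uC xP uP); rewrite exu.
Qed.

Lemma twin_neighbour_complete w x :
  w \notin P -> x \in P -> e w x -> {in P, forall t, e w t}.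
Proof.
move=> wP xP ewx t tP.
have [b bP exb] := complete_bipartite_neighbour P_biclique.1 xP.
have [etx|etb] :=
  orP (complete_bipartite_edge_dominating P_biclique.1 xP bP tP exb).
- by apply: twin_neighbour_step ewx _; rewrite // e_sym.
- apply: (twin_neighbour_step wP bP tP); last by rewrite e_sym.
  exact: twin_neighbour_step ewx exb.
Qed.

End Twins.

Lemma false_twins_common_neighbour (B1 B2 : {set T}) :
  connected_graph e -> biclique e B1 -> biclique e B2 ->
  KB_false_twins e B1 B2 -> {in B1 & B2, forall x y, ~~ e x y} ->
  exists w, {in B1, forall x, e w x} /\ {in B2, forall y, e w y}.
Proof.
move=> conn b1 b2 tw n12.
have n21 : {in B2 & B1, forall y x, ~~ e y x}.
  by move=> y x yB2 xB1; rewrite e_sym n12.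
have /set0Pn [x0 x0B1] := complete_bipartite_neq0 b1.1.
have /set0Pn [y0 y0B2] := complete_bipartite_neq0 b2.1.
have d12 := complete_bipartite_nonadj_disjoint b1.1 n12.
have y0B1 : y0 \notin B1 by rewrite (disjointFl d12 y0B2).
have [a [w [aB1 wB1 eaw]]] := connect_exit_edge (conn x0 y0) x0B1 y0B1.
have [C bC [aC wC _]] := biclique_through_star eaw eaw (negbT (e_irr w)).
have /set0Pn [z] : C :&: B2 != set0.
  apply: (KB_false_twins_meet tw bC).
  - by move=> CB1; move: wB1; rewrite -CB1 wC.
  - by move=> CB2; move: (disjointFr d12 aB1); rewrite -CB2 aC.
  - by apply/set0Pn; exists a; rewrite inE aC.
rewrite inE => /andP [zC zB2].
have ewz : e w z.
  move: (complete_bipartite_edge_dominating bC.1 aC wC zC eaw).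
  by rewrite (negbTE (n21 _ _ zB2 aB1)) e_sym.
have wB2 : w \notin B2 by apply: contraL eaw; exact: n12.
exists w; split.
- apply: (twin_neighbour_complete b1 (KB_false_twins_meet tw) n12 wB1 aB1).
  by rewrite e_sym.
- have tw21 := KB_false_twins_meet (KB_false_twins_sym tw).
  exact: (twin_neighbour_complete b2 tw21 n21 wB2 zB2).
Qed.

End Bicliques.

Theorem lemma1 (T : finType) (e : rel T) :
  simple_graph e -> connected_graph e ->
  forall B1 B2 : {set T},
    biclique e B1 -> biclique e B2 ->
    KB_false_twins e B1 B2 ->
    (forall x y, x \in B1 -> y \in B2 -> ~~ e x y) ->
    (exists v : T, (forall x, x \in B1 -> e v x) /\ (forall y, y \in B2 -> e v y))
    /\ KB_has_induced_K5 e.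
Proof.
move=> [sym irr] conn B1 B2 b1 b2 tw n12.
have [w [wB1 wB2]] := false_twins_common_neighbour sym irr conn b1 b2 tw n12.
split; first by exists w.
have /set0Pn [a aB1] := complete_bipartite_neq0 b1.1.
have /set0Pn [z zB2] := complete_bipartite_neq0 b2.1.
have [a' a'B1 eaa'] := complete_bipartite_neighbour sym b1.1 aB1.
have [z' z'B2 ezz'] := complete_bipartite_neighbour sym b2.1 zB2.
apply: (KB_has_induced_K5_of_star sym irr b1 aB1 a'B1 _ eaa' ezz').
- by apply/negP => wB; move: (wB1 w wB); rewrite irr.
- by move=> x; rewrite !inE => /orP [/orP [/orP [] | ] | ] /eqP ->;
    [apply: wB1 | apply: wB1 | apply: wB2 | apply: wB2].
- by move=> p q; rewrite !inE => /orP [] /eqP -> /orP [] /eqP ->; apply: n12.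
Qed.
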